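(* Let $a,b,c\in\mathbb{Z}$ with $a\equiv2\pmod 4$, $b$ odd, and $ab(a+b)c$ a perfect square. Then the equation $ax^2+by^2=cz^2$ is not partition regular with respect to $x,y$.
   Context: The equation $ax^2+by^2=cz^2$ is partition regular with respect to $x,y$ if for every finite coloring of $\mathbb{N}=\{1,2,\dots\}$ there exist distinct $x,y\in\mathbb{N}$ of the same color and $z\in\mathbb{N}$ with $ax^2+by^2=cz^2$. A perfect square is $k^2$, $k\in\mathbb{Z}$. *)

From mathcomp Require Import all_boot all_order all_algebra.
Set Implicit Arguments. Unset Strict Implicit. Unset Printing Implicit Defensive.
Import Order.TTheory GRing.Theory Num.Theory.
Local Open Scope ring_scope.

(* A finite colouring of N = {1,2,...} with k colours is a map col : nat -> 'I_k
   (its value at 0 is irrelevant). *)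
Definition partition_regular_xy (a b c : int) : Prop :=
  forall (k : nat) (col : nat -> 'I_k),
    exists x y z : nat,
      [&& (0 < x)%N, (0 < y)%N, (0 < z)%N & x != y] /\ col x = col y /\
      a * (x%:Z) ^+ 2 + b * (y%:Z) ^+ 2 = c * (z%:Z) ^+ 2.

Definition perfect_square (n : int) : Prop := exists k : int, n = k ^+ 2.

From mathcomp Require Import all_boot all_order all_algebra.
From mathcomp Require Import zify ring.
Import Order.TTheory GRing.Theory Num.Theory.
Local Open Scope ring_scope.

(* Write a = 2A with A odd and colour n by the parity of its 2-adic valuation.
   If x = 2^i X and y = 2^j Y have the same colour and a x^2 + b y^2 = c z^2, then
   N := a b (a + b) (a x^2 + b y^2) = a b (a + b) c z^2 is a perfect square, because
   a b (a + b) c is.  If j <= i the valuation of N is 2j + 1, which is odd.  If j > i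
   then j >= i + 2, the valuation of N is 2i + 2 and the odd part of N is congruent
   to A B (2A + B) A = 2 A B + B^2 = 3 modulo 4, so it is not an odd square. *)

Definition oddz (m : int) := ~~ (2 %| m)%Z.

Lemma oddzP m : reflect (exists s, m = 2 * s + 1) (oddz m).
Proof.
apply: (iffP idP) => [om|[s ->]]; rewrite /oddz; last by lia.
by exists (m %/ 2)%Z; move: om; rewrite /oddz; lia.
Qed.

Lemma oddzM {m n} : oddz m -> oddz n -> oddz (m * n).
Proof.
move=> /oddzP[s ->] /oddzP[t ->]; apply/oddzP; exists (2 * s * t + s + t); ring.
Qed.

Lemma oddzD2 {m} t : oddz m -> oddz (m + 2 * t).
Proof. rewrite /oddz; lia. Qed.

Lemma oddz_neq0 {m} : oddz m -> m != 0.
Proof. rewrite /oddz; lia. Qed.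

Lemma pow2_odd_decomp {n : int} : n != 0 -> exists i m, n = 2 ^+ i * m /\ oddz m.
Proof.
have [N] := ubnP `|n|%N; elim: N n => [|N IH] n ltnN n0; first by lia.
have [even_n | odd_n] := boolP (2 %| n)%Z; last by exists 0%N, n; rewrite mul1r.
have [i [m [em om]]] : exists i m, (n %/ 2)%Z = 2 ^+ i * m /\ oddz m.
  by apply: IH; lia.
by exists i.+1, m; rewrite exprS -mulrA -em mulrC divzK.
Qed.

Lemma pow2_odd_inj {i j m m'} :
  oddz m -> oddz m' -> 2 ^+ i * m = 2 ^+ j * m' -> i = j /\ m = m'.
Proof.
wlog le_ij : i j m m' / (i <= j)%N => [W om om' e|].
  have [/W|/ltnW/W] := leqP i j; first exact.
  by move=> /(_ m' m om' om (esym e)) [-> ->].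
move=> om om'; rewrite -(subnKC le_ij) exprD -mulrA => /mulfI.
move=> /(_ (expf_neq0 _ (isT : (2 : int) != 0))).
case: (j - i)%N => [|d] e; first by rewrite addn0 e mul1r.
by move: om; rewrite e exprS -mulrA /oddz; lia.
Qed.

Lemma nat_pow2_odd_decomp {x : nat} :
  (0 < x)%N -> exists X, x%:Z = 2 ^+ logn 2 x * X /\ oddz X.
Proof.
move=> x_gt0; have [m m_odd ex] := pfactor_coprime (isT : prime 2) x_gt0.
exists m%:Z; split; first by rewrite {1}ex PoszM mulrC -natz natrX.
by move: m_odd; rewrite coprime2n /oddz /dvdz unfold_in /= dvdn2 negbK.
Qed.

Lemma sqr_pow2_odd {i m k} :
  oddz m -> 2 ^+ i * m = k ^+ 2 -> ~~ odd i /\ exists2 K, oddz K & m = K ^+ 2.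
Proof.
move=> om e; have k0 : k != 0.
  apply/eqP => k0; move: e; rewrite k0 expr0n /=; apply/eqP.
  by rewrite mulf_eq0 expf_eq0 (negbTE (oddz_neq0 om)) andbF.
have [g [K [ek oK]]] := pow2_odd_decomp k0.
rewrite ek exprMn -exprM in e.
have [-> ->] := pow2_odd_inj om (oddzM oK oK) (etrans e (congr1 _ (expr2 K))).
by split; [rewrite oddM andbF | exists K; rewrite ?expr2].
Qed.

Lemma Z4_sqr_odd {m} : oddz m -> (m%:~R : 'Z_4) ^+ 2 = 1.
Proof.
move=> /oddzP[s ->]; rewrite intrD intrM; apply/eqP.
by case: (s%:~R : 'Z_4) => [[|[|[|[|]]]] ?].
Qed.

Lemma odd_form_not_sqr_mod4 (A B X t K : int) :
  oddz A -> oddz B -> oddz X -> oddz K ->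
  A * B * (2 * A + B) * (A * X ^+ 2 + 4 * t) != K ^+ 2.
Proof.
move=> oA oB oX oK; apply/eqP => /(congr1 (intmul (1 : 'Z_4))).
rewrite !(intrM, intrD) -!expr2 !Z4_sqr_odd //.
move: (Z4_sqr_odd oA) (Z4_sqr_odd oB).
move: (A%:~R : 'Z_4) (B%:~R : 'Z_4) (t%:~R : 'Z_4).
by do 3 case=> [[|[|[|[|?]]]] ?].
Qed.

Section SameParity.

Variables (A B X Y : int) (i j : nat).
Hypotheses (oA : oddz A) (oB : oddz B) (oX : oddz X) (oY : oddz Y).

Let P := 2 * A * B * (2 * A + B).
Let Q := 2 * A * (2 ^+ i * X) ^+ 2 + B * (2 ^+ j * Y) ^+ 2.

Lemma oddz_form_coef : oddz (A * B * (2 * A + B)).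
Proof. by rewrite !oddzM // addrC oddzD2. Qed.

Lemma form_not_square_le (le_ji : (j <= i)%N) : ~ perfect_square (P * Q).
Proof.
move=> [k]; rewrite /P /Q.
have [d ->] : exists d, i = (j + d)%N by exists (i - j)%N; lia.
set W := B * Y ^+ 2 + 2 * (2 ^+ (d * 2) * (A * X ^+ 2)).
have oW : oddz W by rewrite oddzD2 // !oddzM.
rewrite [LHS](_ : _ = 2 ^+ (j * 2 + 1) * (A * B * (2 * A + B) * W)); last first.
  by rewrite /W !exprMn -!exprM mulnDl !exprD; ring.
move/(sqr_pow2_odd (oddzM oddz_form_coef oW)) => [/negP[]].
by rewrite addn1 /= oddM andbF.
Qed.

Lemma form_not_square_gt (lt_ij : (i.+1 < j)%N) : ~ perfect_square (P * Q).
Proof.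
move=> [k]; rewrite /P /Q.
have [d ->] : exists d, j = (i + d + 2)%N by exists (j - i.+2)%N; lia.
pose t := 2 * 2 ^+ (d * 2) * (B * Y ^+ 2).
have oW : oddz (A * X ^+ 2 + 4 * t).
  by rewrite (_ : 4 = 2 * 2) // -mulrA oddzD2 // !oddzM.
set W := A * X ^+ 2 + 4 * t.
rewrite [LHS](_ : _ = 2 ^+ (i * 2 + 2) * (A * B * (2 * A + B) * W)); last first.
  by rewrite /W /t !exprMn -!exprM !mulnDl !exprD; ring.
move/(sqr_pow2_odd (oddzM oddz_form_coef oW)) => [_ [K oK /eqP]].
exact/negP/odd_form_not_sqr_mod4.
Qed.

Lemma form_not_square_same_parity : odd i = odd j -> ~ perfect_square (P * Q).
Proof.
move=> eq_odd; have [le_ji|lt_ij] := leqP j i; first exact: form_not_square_le.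
apply: form_not_square_gt; rewrite ltn_neqAle lt_ij andbT.
by apply/eqP => ej; move: eq_odd; rewrite -ej /=; case: odd.
Qed.

End SameParity.

Arguments form_not_square_same_parity {A B X Y i j}.

Theorem propositionP (a b c : int) :
  (a = 2 %[mod 4])%Z -> ~~ (2 %| b)%Z ->
  perfect_square (a * b * (a + b) * c) ->
  ~ partition_regular_xy a b c.
Proof.
move=> a_mod4 oB [k hk] PR.
have [A ea] : exists A, a = 2 * A by exists (a %/ 2)%Z; lia.
have oA : oddz A by rewrite /oddz; lia.
pose col n := @Ordinal 2 (odd (logn 2 n)) (leq_b1 _).
have [x [y [z [/and4P[x_gt0 y_gt0 _ _] [col_xy E]]]]] := PR 2%N col.
have {col_xy} same_parity : odd (logn 2 x) = odd (logn 2 y).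
  by move/(congr1 val): col_xy => /=; case: odd; case: odd.
have [X [eX oX]] := nat_pow2_odd_decomp x_gt0.
have [Y [eY oY]] := nat_pow2_odd_decomp y_gt0.
apply: (form_not_square_same_parity oA oB oX oY same_parity).
exists (k * z); rewrite -eX -eY -ea exprMn -hk E; ring.
Qed.
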